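(* Let $m\in\mathbb{N}$ and let $T$ be a $G$-spaced star with center $r$, with space $V_r$ and basis $B_r$ of cardinality $k$, and leaves $[m]$ with spaces $V_v$ ($v\in[m]$). Let $V=K[G]^n$ for some $n\in\mathbb{N}$ with $n>k$, and let $B=\{gf_i: g\in G,\ i\in[n]\}$ where $f_i$ is the $i$-th standard basis vector of $K[G]^n$. Let $T_m$ be the $G$-spaced star with the same center $(V_r,B_r)$ and leaves $[m]$, each leaf carrying $V$ with basis $B$, and let $\mathcal{X}_m=\mathcal{X}(T_m)$. If $\mathcal{X}_m$ is defined by polynomials of degree at most $D$, then so is $\mathcal{X}(T)$.
   Context: $G$ is a finite Abelian group, $K$ an infinite field over which every finite-dimensional $G$-representation splits into one-dimensional irreducibles; $K[G]$ is the regular representation, with $G$ acting on $K[G]^n$ diagonally. A $G$-spaced star with center $r$ and leaves $[m]$ assigns to each vertex $v$ a finite-dimensional $G$-representation $V_v$ with a distinguished basis $B_v$ permuted by $G$ (and the symmetric bilinear form making $B_v$ orthonormal). $L(T)=\bigotimes_{v\in[m]}V_v$. A $G$-representation of $T$ is a tuple of $G$-invariant elements $A_{rv}=\sum_{b\in B_r}b\otimes a_{b,v}\in V_r\otimes V_v$, $v\in[m]$; the equivariant model $\mathcal{X}(T)\subseteq L(T)$ is the Zariski closure of the set of all tensors $\sum_{b\in B_r}\bigotimes_{v\in[m]}a_{b,v}$. *)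

From HB Require Import structures.
From mathcomp Require Import all_boot all_order all_algebra all_fingroup.
From mathcomp Require Import mxrepresentation.
From mathcomp Require Import mpoly.
Set Implicit Arguments. Unset Strict Implicit. Unset Printing Implicit Defensive.
Import GRing.Theory.
Local Open Scope ring_scope.

Definition infinite_field (K : fieldType) : Prop :=
  forall s : seq K, exists x : K, x \notin s.

(* every finite-dimensional G-representation over K splits into
   one-dimensional irreducibles, i.e. is simultaneously diagonalisable *)
Definition splits_1dim (K : fieldType) (G : finGroupType) : Prop :=
  forall (d : nat) (rG : mx_representation K [set: G]%G d),
    exists2 P : 'M[K]_d, P \in unitmx &
      forall g : G, is_diag_mx (P *m rG g *m invmx P).

(* A vertex space (V_v, B_v): V_v = K^{B_v}, with G permuting the finite    *)
(* basis B_v via a (total) action.  G-spaced star with center r and leaves  *)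
(* [m] = 'I_m: basis Br with action actr at the center, Bl v with action    *)
(* actl v at leaf v.                                                        *)

(* coordinates of L(T) = \bigotimes_{v in [m]} V_v : tuples (c_v)_v *)
Definition leaf_coords (m : nat) (Bl : 'I_m -> finType) : finType :=
  {dffun forall v : 'I_m, Bl v}.

(* the set of tensors sum_{b in B_r} \bigotimes_v a_{b,v}, where
   A_{rv} = sum_b b (x) a_{b,v} is G-invariant in V_r (x) V_v;
   A v b c is the coefficient of b (x) c in A_{rv}. *)
Definition star_param_set (K : fieldType) (G : finGroupType)
    (Br : finType) (actr : {action G &-> Br})
    (m : nat) (Bl : 'I_m -> finType) (actl : forall v, {action G &-> Bl v})
  : (leaf_coords Bl -> K) -> Prop :=
  fun x => exists A : forall v : 'I_m, Br -> Bl v -> K,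
    (forall (v : 'I_m) (g : G) (b : Br) (c : Bl v),
        A v (actr b g) (actl v c g) = A v b c) /\
    (forall c : leaf_coords Bl, x c = \sum_(b : Br) \prod_(v < m) A v b (c v)).
Arguments star_param_set K {G Br} actr {m Bl} actl.

Definition peval (K : fieldType) (C : finType) (p : {mpoly K[#|C|]})
    (x : C -> K) : K :=
  p.@[fun i : 'I_#|C| => x (enum_val i)].

Definition zariski_closure (K : fieldType) (C : finType)
    (S : (C -> K) -> Prop) : (C -> K) -> Prop :=
  fun x => forall p : {mpoly K[#|C|]},
    (forall y, S y -> peval p y = 0) -> peval p x = 0.

Definition defined_in_degree (K : fieldType) (C : finType) (D : nat)
    (X : (C -> K) -> Prop) : Prop :=
  exists P : {mpoly K[#|C|]} -> Prop,
    (forall p, P p -> (msize p <= D.+1)%N) /\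
    (forall x, X x <-> (forall p, P p -> peval p x = 0)).

Definition equivariant_model (K : fieldType) (G : finGroupType)
    (Br : finType) (actr : {action G &-> Br})
    (m : nat) (Bl : 'I_m -> finType) (actl : forall v, {action G &-> Bl v}) :=
  zariski_closure (@star_param_set K G Br actr m Bl actl).
Arguments equivariant_model K {G Br} actr {m Bl} actl.

(* V = K[G]^n with basis B = {g f_i}: basis type G * 'I_n, G acting by      *)
(* multiplication on the first factor (right multiplication; G is abelian,  *)
(* so this coincides with left multiplication).                             *)

Definition regn_act (G : finGroupType) (n : nat) (x : G * 'I_n) (g : G)
  : G * 'I_n := (x.1 * g, x.2)%g.

Lemma regn_act1 (G : finGroupType) (n : nat) :
  (@regn_act G n)^~ 1%g =1 id.
Proof. by case=> h i; rewrite /regn_act /= mulg1. Qed.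

Lemma regn_actM (G : finGroupType) (n : nat) x :
  act_morph (@regn_act G n) x.
Proof. by case: x => h i a b; rewrite /regn_act /= mulgA. Qed.

Definition regn_action (G : finGroupType) (n : nat) : {action G &-> G * 'I_n}
  := TotalAction (@regn_act1 G n) (@regn_actM G n).

From HB Require Import structures.
From mathcomp Require Import all_boot all_order all_algebra all_fingroup.
From mathcomp Require Import mxrepresentation mpoly pgroup ring.
Set Implicit Arguments. Unset Strict Implicit. Unset Printing Implicit Defensive.
Import GRing.Theory.
Local Open Scope ring_scope.

(* Equivariant linear maps [Phi_v : V_v -> V] act leafwise on L(T) and carry
   the parametrization of X(T) into that of X_m, hence X(T) into X_m; so the
   pull-backs of the degree <= D equations of X_m along all such tensor maps
   are degree <= D equations vanishing on X(T).  Conversely, let x satisfy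
   all of them, i.e. every equivariant image of x lies in X_m.  Sending the
   basis vectors indexing a (k+1)-minor of a flattening of x to distinct
   basis vectors [f_i] of V (possible as n > k) turns it into a minor of a
   point of X_m, which vanishes; so every flattening of x has rank <= k.
   Since [#|G|] is invertible in K and V_v splits into characters, a subspace
   of dimension <= n of V_v is fixed by a composite V_v -> K[G]^n -> V_v of
   equivariant maps (an average of a factorization of its isotypic
   projections).  Applying these leafwise writes x as an equivariant image of
   a point of X_m, which lies in X(T). *)

Lemma big_distr_dffun (R : comNzRingType) (I : finType) (T_ : I -> finType)
    (F : forall i, T_ i -> R) :
  \prod_(i : I) \sum_(c : T_ i) F i c =
  \sum_(f : {dffun forall i, T_ i}) \prod_(i : I) F i (f i).
Proof.
pose P_ i := [ffun c : T_ i => F i c].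
rewrite (reindex (@dffun_of_fprod I T_)) /=; last first.
  exact/onW_bij/dffun_of_fprod_bij.
transitivity (\sum_(t : fprod T_) \prod_(i in I) P_ i (t i)); last first.
  by apply: eq_bigr => t _; apply: eq_bigr => i _; rewrite !ffunE.
rewrite (big_fprod _ _ P_); etransitivity; last first.
  exact: (bigA_distr_big_dep _ (fun i j => untag 0 (P_ i) j)).
apply: eq_bigr => i _.
transitivity (\sum_(j : T_ i) P_ i j); first by apply: eq_bigr => j _; rewrite ffunE.
by rewrite (big_tag (fun i (j : T_ i) => P_ i j) i).
Qed.

Lemma prod_eq_dffun (R : comNzRingType) (I : finType) (T_ : I -> finType)
    (c d : {dffun forall i, T_ i}) :
  \prod_(i : I) ((c i == d i)%:R : R) = (c == d)%:R.
Proof.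
have [->|ncd] := eqVneq c d; first by rewrite big1 // => i _; rewrite eqxx.
have [i ni] : exists i, c i != d i.
  apply/existsP; apply: contraNT ncd => /existsPn cd.
  by apply/eqP/ffunP => i; apply/eqP; rewrite -[_ == _]negbK cd.
by rewrite (bigD1 i) //= (negPf ni) mul0r.
Qed.

Section TensorMaps.
Variables (K : fieldType) (m : nat).

(* [Phi v] is the matrix of a linear map from [K^(Bl v)] to [K^(Bl' v)]. *)
Definition tensor_map (Bl Bl' : 'I_m -> finType)
    (Phi : forall v, Bl v -> Bl' v -> K) (x : leaf_coords Bl -> K) :
    leaf_coords Bl' -> K :=
  fun c' => \sum_(c : leaf_coords Bl) x c * \prod_(v < m) Phi v (c v) (c' v).

Definition leafwise_equivariant (G : finGroupType) (Bl Bl' : 'I_m -> finType)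
    (actl : forall v, {action G &-> Bl v}) (actl' : forall v, {action G &-> Bl' v})
    (Phi : forall v, Bl v -> Bl' v -> K) :=
  forall v g c c', Phi v (actl v c g) (actl' v c' g) = Phi v c c'.

Lemma tensor_map_param (G : finGroupType) (Br : finType) (actr : {action G &-> Br})
    (Bl Bl' : 'I_m -> finType)
    (actl : forall v, {action G &-> Bl v}) (actl' : forall v, {action G &-> Bl' v})
    Phi x :
  leafwise_equivariant actl actl' Phi ->
  star_param_set K actr actl x -> star_param_set K actr actl' (tensor_map Phi x).
Proof.
move=> eqPhi [A [eqA xE]].
exists (fun v b c' => \sum_(c : Bl v) A v b c * Phi v c c'); split.
  move=> v g b c'; rewrite (reindex_inj (act_inj (actl v) g)) /=.
  by apply: eq_bigr => c _; rewrite eqA eqPhi.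
move=> c'; rewrite /tensor_map.
under eq_bigr do rewrite xE big_distrl /=.
rewrite exchange_big /=; apply: eq_bigr => b _.
rewrite big_distr_dffun; apply: eq_bigr => c _.
by rewrite -big_split.
Qed.

Lemma tensor_map_comp (Bl Bl' Bl'' : 'I_m -> finType) Phi Psi
    (x : leaf_coords Bl -> K) :
  tensor_map Psi (tensor_map Phi x) =1
  tensor_map (fun v (c : Bl v) (c'' : Bl'' v) =>
                \sum_(c' : Bl' v) Phi v c c' * Psi v c' c'') x.
Proof.
move=> c''; rewrite /tensor_map.
under eq_bigr do rewrite big_distrl /=.
rewrite exchange_big /=; apply: eq_bigr => c _.
rewrite big_distr_dffun big_distrr /=; apply: eq_bigr => c' _.
by rewrite -mulrA -big_split.
Qed.

Lemma tensor_map_delta (Bl Bl' : 'I_m -> finType) Phi (x : leaf_coords Bl -> K)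
    (c' : leaf_coords Bl') (d : leaf_coords Bl) :
  (forall v c, Phi v c (c' v) = (c == d v)%:R) -> tensor_map Phi x c' = x d.
Proof.
move=> PhiE; rewrite /tensor_map.
under eq_bigr do under eq_bigr do rewrite PhiE.
under eq_bigr do rewrite prod_eq_dffun.
rewrite (bigD1 d) //= eqxx mulr1 big1 ?addr0 // => c /negPf->.
by rewrite mulr0.
Qed.

Definition leaf_upd (Bl : 'I_m -> finType) (c : leaf_coords Bl) (v : 'I_m)
    (r : Bl v) : leaf_coords Bl :=
  [ffun w => dfwith (fun w => c w) r w].
Arguments leaf_upd [Bl] c v r.

Lemma leaf_upd_in Bl (c : leaf_coords Bl) v r : leaf_upd c v r v = r.
Proof. by rewrite ffunE dfwith_in. Qed.

Lemma leaf_upd_out Bl (c : leaf_coords Bl) v r w :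
  v != w -> leaf_upd c v r w = c w.
Proof. by move=> vw; rewrite ffunE dfwith_out. Qed.

Lemma leaf_upd_id Bl (c : leaf_coords Bl) v : leaf_upd c v (c v) = c.
Proof.
apply/ffunP => w; have [<-|vw] := eqVneq v w; first by rewrite leaf_upd_in.
by rewrite leaf_upd_out.
Qed.

Lemma tensor_map_fix (Bl : 'I_m -> finType) (E : forall v, Bl v -> Bl v -> K)
    (x : leaf_coords Bl -> K) :
  (forall v (c : leaf_coords Bl) (s : Bl v),
     \sum_(r : Bl v) x (leaf_upd c v r) * E v r s = x (leaf_upd c v s)) ->
  tensor_map E x =1 x.
Proof.
move=> fixE.
pose Ej j v (a b : Bl v) := if (v < j)%N then E v a b else (a == b)%:R.
suff fixEj j : (j <= m)%N -> tensor_map (Ej j) x =1 x.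
  move=> c; rewrite -(fixEj m) //; apply: eq_bigr => c' _.
  by congr (_ * _); apply: eq_bigr => v _; rewrite /Ej ltn_ord.
elim: j => [|j IHj] ltjm c.
  by apply: tensor_map_delta => v a.
pose v : 'I_m := Ordinal ltjm.
have EjS : forall a b : Bl v, Ej j.+1 v a b = E v a b by move=> a b; rewrite /Ej ltnSn.
have Ej_v : forall a b : Bl v, Ej j v a b = (a == b)%:R by move=> a b; rewrite /Ej ltnn.
have Ej_w w : w != v -> Ej j.+1 w =2 Ej j w.
  move=> wv a b; rewrite /Ej ltnS leq_eqVlt.
  by rewrite -[w == j :> nat]/(w == v) (negPf wv).
suff -> : tensor_map (Ej j.+1) x c =
          \sum_(r : Bl v) tensor_map (Ej j) x (leaf_upd c v r) * E v r (c v).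
  by under eq_bigr do rewrite IHj ?(ltnW ltjm) //; rewrite fixE leaf_upd_id.
rewrite /tensor_map; under [RHS]eq_bigr do rewrite big_distrl /=.
rewrite exchange_big /=; apply: eq_bigr => c' _.
under [RHS]eq_bigr do rewrite -mulrA.
rewrite -big_distrr /=; congr (_ * _).
rewrite (bigD1 v) //= EjS.
under [RHS]eq_bigr => r _.
  rewrite (bigD1 v) //= leaf_upd_in Ej_v.
  under eq_bigr => w wv do rewrite leaf_upd_out 1?eq_sym //.
  over.
rewrite /= (bigD1 (c' v)) //= eqxx mul1r [X in _ = _ + X]big1 ?addr0; last first.
  by move=> r rc; rewrite eq_sym (negPf rc) !mul0r.
rewrite mulrC; congr (_ * _); apply: eq_bigr => w wv.
by rewrite Ej_w.
Qed.

End TensorMaps.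
Arguments leaf_upd [m Bl] c v r.

Section LinearPullback.
Variable K : fieldType.

Lemma msizeM_le_pred n (p q : {mpoly K[n]}) :
  (msize (p * q) <= (msize p).-1 + msize q)%N.
Proof.
have [->|nzp] := eqVneq p 0; first by rewrite mul0r msize0.
have [->|nzq] := eqVneq q 0; first by rewrite mulr0 msize0.
rewrite msizeM //; have : (0 < msize p)%N by rewrite lt0n msize_poly_eq0.
by case: (msize p).
Qed.

Lemma msize_prod_le n (I : Type) (r : seq I) (F : I -> {mpoly K[n]}) :
  (msize (\prod_(i <- r) F i) <= (\sum_(i <- r) (msize (F i)).-1).+1)%N.
Proof.
elim: r => [|a r IHr]; first by rewrite !big_nil msize1.
rewrite !big_cons; apply: leq_trans (msizeM_le_pred _ _) _.
by rewrite -addnS leq_add2l.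
Qed.

Lemma msize_exp_le n (p : {mpoly K[n]}) e :
  (msize p <= 2)%N -> (msize (p ^+ e) <= e.+1)%N.
Proof.
move=> le_p2; elim: e => [|e IHe]; first by rewrite expr0 msize1.
rewrite exprS; apply: leq_trans (msizeM_le_pred _ _) _.
by rewrite -[e.+2]add1n leq_add // -subn1 leq_subLR.
Qed.

Lemma msize_comp_le n k (q : {mpoly K[n]}) (lq : n.-tuple {mpoly K[k]}) :
  (forall i, msize (tnth lq i) <= 2)%N -> (msize (q \mPo lq) <= msize q)%N.
Proof.
move=> le_lq2; rewrite comp_mpolyE.
apply: leq_trans (msize_sum _ _ predT) _; apply/bigmax_leqP_seq => mm mm_q _.
apply: leq_trans (msizeZ_le _ _) _; apply: leq_trans (msize_prod_le _ _) _.
apply: leq_ltn_trans (msize_mdeg_lt mm_q); rewrite mdegE; apply: leq_sum => i _.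
by rewrite -subn1 leq_subLR add1n msize_exp_le.
Qed.

Lemma peval_linear_pullback (C C' : finType) (L : C -> C' -> K)
    (q : {mpoly K[#|C'|]}) :
  exists2 q' : {mpoly K[#|C|]}, (msize q' <= msize q)%N &
    forall x, peval q' x = peval q (fun c' => \sum_(c : C) x c * L c c').
Proof.
pose lq := [tuple \sum_(c : C) L c (enum_val i) *: 'X_(enum_rank c) | i < #|C'|].
exists (q \mPo lq).
  apply: msize_comp_le => i; rewrite tnth_mktuple.
  apply: leq_trans (msize_sum _ _ predT) _; apply/bigmax_leqP_seq => c _ _.
  by apply: leq_trans (msizeZ_le _ _) _; rewrite msizeX mdeg1.
move=> x; rewrite /peval comp_mpoly_meval; apply: meval_eq => i.
rewrite tnth_mktuple raddf_sum /=; apply: eq_bigr => c _.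
by rewrite mevalZ mevalXU enum_rankK mulrC.
Qed.

Lemma zariski_closure_linear (C C' : finType) (L : C -> C' -> K)
    (S : (C -> K) -> Prop) (S' : (C' -> K) -> Prop) :
  (forall y, S y -> S' (fun c' => \sum_(c : C) y c * L c c')) ->
  forall x, zariski_closure S x ->
    zariski_closure S' (fun c' => \sum_(c : C) x c * L c c').
Proof.
move=> SS' x Sx p S'p; have [q _ qE] := peval_linear_pullback L p.
by rewrite -qE; apply: Sx => y Sy; rewrite qE; apply: S'p; apply: SS'.
Qed.

Lemma zariski_closure_ext (C : finType) (S : (C -> K) -> Prop) x y :
  x =1 y -> zariski_closure S x -> zariski_closure S y.
Proof.
move=> xy Sx p Sp; rewrite /peval -(meval_eq _ (fun i => xy (enum_val i))).
exact: Sx.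
Qed.

End LinearPullback.

Section RankFacts.
Variable K : fieldType.

Lemma mxrank_minor (p q r : nat) (A : 'M[K]_(p, q)) : (r <= \rank A)%N ->
  exists (f : 'I_r -> 'I_p) (g : 'I_r -> 'I_q),
    \det (\matrix_(i, j) A (f i) (g j)) != 0.
Proof.
move=> le_r_rk; pose f i := maxrankfun A (widen_ord le_r_rk i).
have rowsubE : rowsub f A = (pid_mx r : 'M_(r, \rank A)) *m rowsub (maxrankfun A) A.
  apply/matrixP => i j; rewrite !mxE (bigD1 (widen_ord le_r_rk i)) //= big1.
    by rewrite !mxE /= eqxx ltn_ord mul1r addr0.
  move=> k ki; rewrite !mxE /= -[i == k :> nat]/(widen_ord le_r_rk i == k).
  by rewrite eq_sym (negPf ki) mul0r.
have full : row_full (rowsub f A)^T.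
  by rewrite /row_full mxrank_tr rowsubE mxrankMfree ?maxrowsub_free ?rank_pid_mx.
exists f, (fullrankfun full).
have := fullrowsub_unit full; rewrite unitmxE unitfE -det_tr.
by congr (\det _ != 0); apply/matrixP => i j; rewrite !mxE.
Qed.

Lemma det_mulmx_inner_lt (r s : nat) (X : 'M[K]_(r, s)) (Z : 'M[K]_(s, r)) :
  (s < r)%N -> \det (X *m Z) = 0.
Proof.
move=> lt_sr; apply/eqP; apply: contraTT lt_sr => detXZ; rewrite -leqNgt.
have : X *m Z \in unitmx by rewrite unitmxE unitfE.
rewrite -row_free_unit => /eqP <-.
exact: leq_trans (mxrankM_maxl _ _) (rank_leq_col _).
Qed.

Definition mxfactorl n p q (A : 'M[K]_(p, q)) : 'M[K]_(p, n) :=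
  col_base A *m pid_mx (\rank A).
Definition mxfactorr n p q (A : 'M[K]_(p, q)) : 'M[K]_(n, q) :=
  pid_mx (\rank A) *m row_base A.

Lemma mul_mxfactor n p q (A : 'M[K]_(p, q)) : (\rank A <= n)%N ->
  mxfactorl n A *m mxfactorr n A = A.
Proof.
move=> le_rk_n; rewrite /mxfactorl /mxfactorr mulmxA -[col_base A *m _ *m _]mulmxA.
by rewrite mul_pid_mx minnn (minn_idPr le_rk_n) pid_mx_1 mulmx1 mulmx_base.
Qed.

End RankFacts.

Lemma sum_mulchar_eq0 (K : fieldType) (G : finGroupType) (chi : G -> K) g0 :
  (forall g h, chi (g * h)%g = chi g * chi h) -> chi g0 != 1 ->
  \sum_(h : G) chi h = 0.
Proof.
move=> chiM chi_g0; set S := \sum_(h : G) _.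
have SE : S = chi g0 * S.
  rewrite /S big_distrr /= (reindex_inj (mulgI g0)) /=.
  by apply: eq_bigr => h _; rewrite chiM.
apply/eqP; move/eqP: SE; rewrite -subr_eq0 -{1}[S]mul1r -mulrBl mulf_eq0.
by rewrite subr_eq0 eq_sym (negPf chi_g0).
Qed.

Section PermutationRepresentation.
Variables (K : fieldType) (G : finGroupType) (T : finType) (act : {action G &-> T}).

Local Notation ev := (@enum_val T predT).
Local Notation er := (@enum_rank T).

Definition permrep_mx (g : G) : 'M[K]_#|T| :=
  \matrix_(j, l) (act (ev j) g == ev l)%:R.

Lemma permrep_mx_rowE g i (c : 'I_#|T| -> K) :
  \sum_j permrep_mx g i j * c j = c (er (act (ev i) g)).
Proof.
rewrite (bigD1 (er (act (ev i) g))) //= big1 ?addr0.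
  by rewrite mxE enum_rankK eqxx mul1r.
move=> j ji; rewrite mxE; case: eqP => [e|_]; last by rewrite mul0r.
by move: ji; rewrite e enum_valK eqxx.
Qed.

Lemma permrep_mx_colE g l (c : 'I_#|T| -> K) :
  \sum_j c j * permrep_mx g j l = c (er (act (ev l) g^-1%g)).
Proof.
rewrite (bigD1 (er (act (ev l) g^-1%g))) //= big1 ?addr0.
  by rewrite mxE enum_rankK actKV eqxx mulr1.
move=> j jl; rewrite mxE; case: eqP => [e|_]; last by rewrite mulr0.
by move: jl; rewrite -e actK enum_valK eqxx.
Qed.

Lemma permrep_mx1 : permrep_mx 1%g = 1%:M.
Proof. by apply/matrixP => j l; rewrite !mxE act1 (inj_eq enum_val_inj). Qed.

Lemma permrep_mxM g h : permrep_mx (g * h)%g = permrep_mx g *m permrep_mx h.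
Proof.
by apply/matrixP => j l; rewrite [RHS]mxE permrep_mx_rowE !mxE enum_rankK actM.
Qed.

Lemma permrep_mx_repr : mx_repr [set: G] permrep_mx.
Proof. by split=> [|g h _ _]; [exact: permrep_mx1 | exact: permrep_mxM]. Qed.

Definition permrepr := MxRepresentation permrep_mx_repr.

Section Diagonalized.
Variables (P : 'M[K]_#|T|) (P_unit : P \in unitmx).
Hypothesis P_diag : forall g, is_diag_mx (P *m permrep_mx g *m invmx P).

Definition diag_rep g := P *m permrep_mx g *m invmx P.

Definition diag_char j : {ffun G -> K} := [ffun g => diag_rep g j j].

Lemma diag_rep_offdiag g j l : j != l -> diag_rep g j l = 0.
Proof. exact: is_diag_mxP (P_diag g) j l. Qed.

Lemma diag_repM g h : diag_rep (g * h)%g = diag_rep g *m diag_rep h.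
Proof. by rewrite /diag_rep permrep_mxM !mulmxA mulmxKV. Qed.

Lemma permrep_mx_diagE g : permrep_mx g = invmx P *m diag_rep g *m P.
Proof. by rewrite /diag_rep !mulmxA mulVmx // mul1mx mulmxKV. Qed.

Lemma diag_rep_conjE g h (F : 'M[K]_#|T|) j l :
  (diag_rep g *m F *m diag_rep h) j l = diag_char j g * F j l * diag_char l h.
Proof.
rewrite mxE (bigD1 l) //= big1 ?addr0 => [|k kl]; last first.
  by rewrite diag_rep_offdiag ?mulr0.
rewrite !ffunE mxE (bigD1 j) //= big1 ?addr0 // => k kj.
by rewrite diag_rep_offdiag ?mul0r // eq_sym.
Qed.

Lemma diag_charM j g h : diag_char j (g * h)%g = diag_char j g * diag_char j h.
Proof.
by rewrite {1}ffunE diag_repM -(mulmx1 (diag_rep g)) diag_rep_conjE mxE eqxx mulr1.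
Qed.

Lemma diag_char1 j : diag_char j 1%g = 1.
Proof. by rewrite ffunE /diag_rep permrep_mx1 mulmx1 mulmxV // mxE eqxx. Qed.

Lemma diag_charV j g : diag_char j g^-1%g * diag_char j g = 1.
Proof. by rewrite -diag_charM mulVg diag_char1. Qed.

Lemma diag_charX j x e : diag_char j (x ^+ e)%g = diag_char j x ^+ e.
Proof.
elim: e => [|e IHe]; first by rewrite expg0 expr0 diag_char1.
by rewrite expgS diag_charM IHe exprS.
Qed.

Lemma diag_char_neq0 j g : diag_char j g != 0.
Proof.
apply/eqP => chi0; move: (diag_charV j g); rewrite chi0 mulr0 => /eqP.
by rewrite eq_sym oner_eq0.
Qed.

Lemma diag_char_orth j l :
  \sum_(h : G) diag_char j h^-1%g * diag_char l h =
  (diag_char j == diag_char l)%:R * #|G|%:R.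
Proof.
have [<-|ne] := eqVneq (diag_char j) (diag_char l).
  by rewrite mul1r (eq_bigr (fun _ => 1)) ?sumr_const // => h _; rewrite diag_charV.
rewrite mul0r; have [g0 ne_g0] : exists g0, diag_char j g0 != diag_char l g0.
  apply/existsP; apply: contraNT ne => /existsPn jl.
  by apply/eqP/ffunP => g; apply/eqP; rewrite -[_ == _]negbK jl.
apply: (@sum_mulchar_eq0 _ _ _ g0) => [g h|].
  by rewrite invMg !diag_charM; ring.
apply: contra ne_g0 => /eqP chi_g0; apply/eqP.
by apply: (mulfI (diag_char_neq0 j g0^-1%g)); rewrite diag_charV chi_g0.
Qed.

Lemma diag_rep_average (F : 'M[K]_#|T|) j l :
  (\sum_(h : G) diag_rep h^-1%g *m F *m diag_rep h) j l =
  (diag_char j == diag_char l)%:R * #|G|%:R * F j l.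
Proof.
rewrite summxE; under eq_bigr do rewrite diag_rep_conjE mulrAC.
by rewrite -big_distrl /= diag_char_orth.
Qed.

Lemma permrep_mx_eq1 x : (forall j, diag_char j x = 1) -> permrep_mx x = 1%:M.
Proof.
move=> chi_x1; have Dx1 : diag_rep x = 1%:M.
  apply/matrixP => j l; rewrite [RHS]mxE; have [<-|jl] := eqVneq j l.
    by have := chi_x1 j; rewrite ffunE.
  by rewrite diag_rep_offdiag.
by rewrite permrep_mx_diagE Dx1 mulmx1 mulVmx.
Qed.

Definition isotypic_mx (chi : {ffun G -> K}) : 'M[K]_#|T| :=
  diag_mx (\row_l (diag_char l == chi)%:R).

(* Averaging [U *m V] over [G] projects it onto the commutant; choosing [U V]
   as a factorization of the projections onto the isotypic parts of the row
   space of [M] makes the average act as the identity on that row space. *)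
Lemma permrep_average_factor (G_unit : #|G|%:R != 0 :> K) n N
    (M : 'M[K]_(N, #|T|)) :
  (\rank M <= n)%N ->
  exists (U : 'M[K]_(#|T|, n)) (V : 'M[K]_(n, #|T|)),
    forall u : 'rV[K]_#|T|, (u <= M)%MS ->
      u *m \sum_(h : G) (permrep_mx h^-1%g *m (U *m V) *m permrep_mx h) = u.
Proof.
move=> rkM; pose X := M *m invmx P.
pose Q chi := pinvmx (X *m isotypic_mx chi) *m (X *m isotypic_mx chi).
have rkQ chi : (\rank (Q chi) <= n)%N.
  apply: leq_trans (mxrankM_maxr _ _) _; apply: leq_trans (mxrankM_maxl _ _) _.
  exact: leq_trans (mxrankM_maxl _ _) _.
pose U := \matrix_(t, i) (#|G|%:R^-1 * mxfactorl n (Q (diag_char t)) t i).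
pose V := \matrix_(i, t) mxfactorr n (Q (diag_char t)) i t.
exists (invmx P *m U), (V *m P) => u Mu.
set A := \sum_(h : G) diag_rep h^-1%g *m (U *m V) *m diag_rep h.
have -> : \sum_(h : G) permrep_mx h^-1%g *m (invmx P *m U *m (V *m P)) *m permrep_mx h
    = invmx P *m A *m P.
  rewrite /A mulmx_sumr mulmx_suml; apply: eq_bigr => h _.
  by rewrite !permrep_mx_diagE !mulmxA !(mulmxK P_unit).
have AE j l : A j l = (diag_char j == diag_char l)%:R * Q (diag_char l) j l.
  rewrite diag_rep_average; case: eqP => [chi_jl|_]; last by rewrite !mul0r.
  rewrite !mul1r -[Q _](mul_mxfactor (rkQ _)) !mxE big_distrr /=.
  by apply: eq_bigr => i _; rewrite !mxE chi_jl !mulrA mulfV // mul1r.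
pose u' := u *m invmx P.
suff u'A : u' *m A = u' by rewrite !mulmxA -/u' u'A mulmxKV.
apply/rowP => l; rewrite mxE; under eq_bigr do rewrite AE mulrA.
have u'Q : u' *m isotypic_mx (diag_char l) *m Q (diag_char l) =
           u' *m isotypic_mx (diag_char l).
  by rewrite /Q mulmxA mulmxKpV // !submxMr.
have := congr1 (fun w : 'rV[K]_#|T| => w 0 l) u'Q.
rewrite [in RHS]mul_mx_diag !mxE eqxx mulr1 => <-.
by apply: eq_bigr => j _; rewrite mul_mx_diag !mxE.
Qed.

End Diagonalized.
End PermutationRepresentation.

(* If [p] divides [#|G|] in characteristic [p], an element [x] of order [p]
   has only the eigenvalue [1] in the regular representation ([a ^+ p = 1]
   forces [(a - 1) ^+ p = 0]), so by diagonalizability it acts trivially. *)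
Lemma splits_1dim_natr_card (K : fieldType) (G : finGroupType) :
  splits_1dim K G -> #|G|%:R != 0 :> K.
Proof.
move=> splitK; apply/negP => G0.
have [p charp] : exists p, p \in [pchar K].
  by apply: (natf0_pchar _ G0); apply/card_gt0P; exists 1%g.
have p_pr := pcharf_prime charp.
have p_dvd_G : (p %| #|[set: G]|)%N by rewrite cardsT (dvdn_pcharf charp).
have [x _ ox] := Cauchy p_pr p_dvd_G.
have [P P_unit P_diag] := splitK _ (permrepr K 'R%act).
have chi_x1 j : diag_char 'R%act P j x = 1.
  set a := diag_char 'R%act P j x.
  have ap1 : a ^+ p = 1 by rewrite /a -diag_charX // -ox expg_order diag_char1.
  have : (a - 1) ^+ p == 0.
    by rewrite exprDn_pchar ?pnatE // exprNn_pchar ?pnatE // ap1 expr1n subrr.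
  by rewrite expf_eq0 prime_gt0 //= subr_eq0 => /eqP.
have := congr1 (fun A : 'M[K]_#|G| => A (enum_rank 1%g) (enum_rank 1%g))
  (permrep_mx_eq1 P_unit P_diag chi_x1).
rewrite /= !mxE !enum_rankK eqxx /= mul1g.
case: eqP => [x1|_ /eqP]; last by rewrite eq_sym oner_eq0.
by move: ox p_pr; rewrite x1 order1 => <-.
Qed.

Section RegularLift.
Variables (K : fieldType) (G : finGroupType) (T : finType).
Variables (act : {action G &-> T}) (n : nat).

(* [to_regn lam] maps the basis vector [c] of [K^T] to the sum over [g] and
   [i] of [lam i (c ^ g^-1)] times [g f_i]: the equivariant extension of the
   map with matrix [lam]; [of_regn w] is its transpose analogue. *)
Definition to_regn (lam : 'I_n -> T -> K) : T -> G * 'I_n -> K :=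
  fun c hi => lam hi.2 (act c hi.1^-1%g).

Definition of_regn (w : 'I_n -> T -> K) : G * 'I_n -> T -> K :=
  fun hi s => w hi.2 (act s hi.1^-1%g).

Lemma to_regn_equivariant lam g c hi :
  to_regn lam (act c g) (regn_action G n hi g) = to_regn lam c hi.
Proof. by case: hi => h i; rewrite /to_regn /= -actM invMg mulgA mulgV mul1g. Qed.

Lemma of_regn_equivariant w g hi s :
  of_regn w (regn_action G n hi g) (act s g) = of_regn w hi s.
Proof. by case: hi => h i; rewrite /of_regn /= -actM invMg mulgA mulgV mul1g. Qed.

Lemma to_regn1 lam c i : to_regn lam c (1%g, i) = lam i c.
Proof. by rewrite /to_regn /= invg1 act1. Qed.

Lemma regn_factorization (splitK : splits_1dim K G) N (M : 'M[K]_(N, #|T|)) :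
  (\rank M <= n)%N ->
  exists lam w : 'I_n -> T -> K, forall u : 'rV[K]_#|T|, (u <= M)%MS ->
    forall s, \sum_(r : T) u 0 (enum_rank r) *
                (\sum_(hi : G * 'I_n) to_regn lam r hi * of_regn w hi s)
              = u 0 (enum_rank s).
Proof.
move=> rkM; have [P P_unit P_diag] := splitK _ (permrepr K act).
have [U [V UV]] :=
  permrep_average_factor P_unit P_diag (splits_1dim_natr_card splitK) rkM.
exists (fun i t => U (enum_rank t) i), (fun i t => V i (enum_rank t)) => u Mu s.
rewrite -[RHS](congr1 (fun A : 'rV[K]_#|T| => A 0 (enum_rank s)) (UV u Mu)) /=.
rewrite mxE (reindex (@enum_val T predT)) /=; last exact/onW_bij/enum_val_bij.
apply: eq_bigr => j _; rewrite enum_valK; congr (_ * _).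
rewrite summxE -(pair_bigA _ (fun h i => U (enum_rank (act (enum_val j) h^-1%g)) i *
   V i (enum_rank (act s h^-1%g)))) /=.
apply: eq_bigr => h _; rewrite mxE.
rewrite (permrep_mx_colE _ _ _ (fun j0 => (permrep_mx K act h^-1%g *m (U *m V)) j j0)).
by rewrite /= enum_rankK mxE permrep_mx_rowE mxE.
Qed.

End RegularLift.

Section ModelMaps.
Variables (K : fieldType) (G : finGroupType) (Br : finType).
Variables (actr : {action G &-> Br}) (m : nat).

Lemma model_tensor_map (Bl Bl' : 'I_m -> finType)
    (actl : forall v, {action G &-> Bl v}) (actl' : forall v, {action G &-> Bl' v})
    (Phi : forall v, Bl v -> Bl' v -> K) x :
  leafwise_equivariant actl actl' Phi ->
  equivariant_model K actr actl x ->
  equivariant_model K actr actl' (tensor_map Phi x).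
Proof.
move=> eqPhi Xx; apply: (zariski_closure_linear _ Xx) => y.
exact: tensor_map_param.
Qed.

Definition flattening (Bl : 'I_m -> finType) (x : leaf_coords Bl -> K) v :
    'M[K]_(#|leaf_coords Bl|, #|Bl v|) :=
  \matrix_(i, j) x (leaf_upd (enum_val i) v (enum_val j)).

(* On the parametrized set, a flattening factors through [K^Br]. *)
Lemma model_minor_eq0 (Bl : 'I_m -> finType) (actl : forall v, {action G &-> Bl v})
    v r (lt_Br_r : (#|Br| < r)%N)
    (sig : 'I_r -> leaf_coords Bl) (rho : 'I_r -> Bl v) y :
  equivariant_model K actr actl y ->
  \det (\matrix_(a, b) y (leaf_upd (sig a) v (rho b))) = 0.
Proof.
move=> Xy; pose p : {mpoly K[#|leaf_coords Bl|]} :=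
  \det (\matrix_(a, b) 'X_(enum_rank (leaf_upd (sig a) v (rho b)))).
have pE z : peval p z = \det (\matrix_(a, b) z (leaf_upd (sig a) v (rho b))).
  rewrite /peval /p -det_map_mx; congr (\det _); apply/matrixP => a b.
  by rewrite !mxE /= (mevalXU (fun i => z (enum_val i))) enum_rankK.
rewrite -pE; apply: Xy => z [A [_ zE]]; rewrite pE.
pose X : 'M[K]_(r, #|Br|) :=
  \matrix_(a, i) \prod_(w < m | w != v) A w (enum_val i) (sig a w).
pose Z : 'M[K]_(#|Br|, r) := \matrix_(i, b) A v (enum_val i) (rho b).
suff -> : \matrix_(a, b) z (leaf_upd (sig a) v (rho b)) = X *m Z.
  exact: det_mulmx_inner_lt.
apply/matrixP => a b; rewrite !mxE zE.
rewrite (reindex (@enum_val Br predT)) /=; last exact/onW_bij/enum_val_bij.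
apply: eq_bigr => i _; rewrite !mxE (bigD1 v) //= leaf_upd_in mulrC.
by congr (_ * _); apply: eq_bigr => w wv; rewrite leaf_upd_out // eq_sym.
Qed.

End ModelMaps.

Section RegularImages.
Variables (K : fieldType) (G : finGroupType) (Br : finType).
Variables (actr : {action G &-> Br}) (m : nat).
Variables (Bl : 'I_m -> finType) (actl : forall v, {action G &-> Bl v}).
Variables (n : nat) (x : leaf_coords Bl -> K).
Hypothesis lt_Br_n : (#|Br| < n)%N.
Hypothesis model_images : forall Phi,
  leafwise_equivariant actl (fun _ => regn_action G n) Phi ->
  equivariant_model K actr (fun _ : 'I_m => regn_action G n) (tensor_map Phi x).

(* A nonzero [k.+1]-minor of a flattening would be carried to a nonzero minor
   of a point of the model by an equivariant map sending the basis vectors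
   indexing its rows and columns to distinct basis vectors [f_i]. *)
Lemma flattening_rank_le v : (\rank (flattening x v) <= #|Br|)%N.
Proof.
rewrite leqNgt; apply/negP => /mxrank_minor [f [g minor_neq0]].
pose sig a : leaf_coords Bl := enum_val (f a).
pose rho b : Bl v := enum_val (g b).
pose lam w (i : 'I_n) (c : Bl w) : K :=
  ((i < #|Br|.+1)%N && (c == leaf_upd (sig (inord i)) v (rho (inord i)) w))%:R.
pose f_ a : G * 'I_n := (1%g, widen_ord lt_Br_n a).
have PhiE w c b :
    to_regn (actl w) (lam w) c (f_ b) = (c == leaf_upd (sig b) v (rho b) w)%:R.
  by rewrite to_regn1 /lam /= ltn_ord inord_val.
have minor_eq0 := model_minor_eq0 (v := v) (ltnSn #|Br|) (fun a => [ffun=> f_ a]) f_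
  (model_images (fun w => @to_regn_equivariant _ _ _ (actl w) n (lam w))).
move/eqP: minor_neq0; apply; rewrite -minor_eq0.
congr (\det _); apply/matrixP => a b.
rewrite !mxE; symmetry; apply: tensor_map_delta => w.
have [<- c|vw c] := eqVneq v w; first by rewrite !leaf_upd_in PhiE leaf_upd_in.
by rewrite !leaf_upd_out // ffunE PhiE leaf_upd_out.
Qed.

Lemma model_of_regular_images : splits_1dim K G -> equivariant_model K actr actl x.
Proof.
move=> splitK.
have /fin_all_exists [LW fixLW] v :
    exists LW : ('I_n -> Bl v -> K) * ('I_n -> Bl v -> K),
    forall c s, \sum_(r : Bl v) x (leaf_upd c v r) *
      (\sum_(hi : G * 'I_n) to_regn (actl v) LW.1 r hi * of_regn (actl v) LW.2 hi s)
    = x (leaf_upd c v s).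
  have [lam [w fix_lw]] := regn_factorization (actl v) splitK
    (leq_trans (flattening_rank_le v) (ltnW lt_Br_n)).
  exists (lam, w) => c s.
  have := fix_lw _ (row_sub (enum_rank c) (flattening x v)) s.
  rewrite !mxE !enum_rankK => <-.
  by apply: eq_bigr => r _; rewrite !mxE !enum_rankK.
pose Phi v := to_regn (actl v) (LW v).1.
pose Psi v := of_regn (actl v) (LW v).2.
apply: (@zariski_closure_ext _ _ _ (tensor_map Psi (tensor_map Phi x))).
  by move=> c; rewrite tensor_map_comp; apply: tensor_map_fix.
apply: model_tensor_map (model_images _) => v *; first exact: of_regn_equivariant.
exact: to_regn_equivariant.
Qed.

End RegularImages.

Theorem lemma6p6 (G : finGroupType) (K : fieldType)
    (HGab : abelian [set: G]) (HKinf : infinite_field K)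
    (HKsplit : splits_1dim K G)
    (m : nat) (Br : finType) (actr : {action G &-> Br})
    (Bl : 'I_m -> finType) (actl : forall v : 'I_m, {action G &-> Bl v})
    (n : nat) (Hn : (#|Br| < n)%N) (D : nat) :
  defined_in_degree D
    (equivariant_model K actr (fun v : 'I_m => regn_action G n)) ->
  defined_in_degree D (equivariant_model K actr actl).
Proof.
move=> [P [degP modelE]].
pose pullback q := exists p Phi,
  [/\ P p, leafwise_equivariant actl (fun _ => regn_action G n) Phi,
      (msize q <= msize p)%N & forall x, peval q x = peval p (tensor_map Phi x)].
exists pullback; split.
  by move=> q [p [Phi [Pp _ le_qp _]]]; apply: leq_trans le_qp (degP p Pp).
move=> x; split.
  move=> Xx q [p [Phi [Pp eqPhi _ ->]]].
  exact: (modelE _).1 (model_tensor_map eqPhi Xx) p Pp.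
move=> pullback_x; apply: (model_of_regular_images Hn) HKsplit => Phi eqPhi.
apply/modelE => p Pp.
pose L (c : leaf_coords Bl) (c' : leaf_coords (fun _ => (G * 'I_n)%type)) :=
  \prod_(v < m) Phi v (c v) (c' v).
have [q le_qp qE] := peval_linear_pullback L p.
by rewrite -qE; apply: pullback_x; exists p, Phi.
Qed.
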